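(* Let $\ell\ge 2$ and let $G$ be a pendant graph with $m$ edges and $n$ vertices. Then $\overline{G}$ is $N$-AW if and only if $\gcd(2(n-m)-1,\ell)=1$. Equivalently, if $G$ is a graph of even order $n$ and size $\binom{n}{2}-\left(\frac{n}{2}+k\right)$ such that $\overline{G}$ is a pendant graph, then $G$ is $N$-AW if and only if $\gcd(n-2k-1,\ell)=1$.
   Context: All graphs are finite and simple; $\overline{G}$ is the complement. For a graph $H$, $H\odot K_1$ is obtained from $H$ by adding, for each vertex $u$ of $H$, a new vertex adjacent only to $u$; a pendant graph is a graph of this form. Labels lie in $\mathbb{Z}_\ell$. In the neighborhood Lights Out game, toggling a vertex $w$ adds $1$ (mod $\ell$) to the label of each vertex of the closed neighborhood $N[w]$; the game is won when all labels are $0$; a graph is $N$-AW if every initial labeling can be won. *)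

From mathcomp Require Import all_boot all_order all_algebra.
Set Implicit Arguments. Unset Strict Implicit. Unset Printing Implicit Defensive.
Import GRing.Theory.
Local Open Scope ring_scope.

Definition simple_graph (T : finType) (e : rel T) : Prop :=
  symmetric e /\ irreflexive e.

Definition complement (T : finType) (e : rel T) : rel T :=
  fun x y => (x != y) && ~~ e x y.

Definition num_edges (T : finType) (e : rel T) : nat :=
  #|[set A : {set T} | (#|A| == 2)%N &&
      [forall x in A, forall y in A, (x != y) ==> e x y]]|.

(* Corona H ⊙ K1: vertex set V + V, inl u are the vertices of H, inr u is the
   new pendant vertex attached to u. *)
Definition corona (V : finType) (eH : rel V) : rel (V + V) :=
  fun a b => match a, b with
  | inl u, inl v => eH u v
  | inl u, inr v => u == v
  | inr u, inl v => u == v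
  | inr _, inr _ => false
  end.

Definition pendant_graph (T : finType) (e : rel T) : Prop :=
  exists (V : finType) (eH : rel V) (f : T -> V + V),
    simple_graph eH /\ bijective f /\ forall x y, e x y = corona eH (f x) (f y).

Definition closed_nbhd (T : finType) (e : rel T) (w : T) : pred T :=
  fun v => (v == w) || e w v.

Definition toggle (l : nat) (T : finType) (e : rel T) (c : T -> 'Z_l) (w : T)
  : T -> 'Z_l :=
  fun v => c v + (closed_nbhd e w v)%:R.

Definition winnable (l : nat) (T : finType) (e : rel T) (c : T -> 'Z_l) : Prop :=
  exists s : seq T, forall v, foldl (toggle e) c s v = 0.

Definition N_AW (l : nat) (T : finType) (e : rel T) : Prop :=
  forall c : T -> 'Z_l, winnable e c.

(* Lights Out over Z_l is always winnable iff the closed neighbourhood matrix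
   N of the graph is invertible over Z_l, since the number of times a vertex
   is toggled only matters modulo l.  For a pendant graph G = H ⊙ K1 the
   adjacency matrix A = [[A_H, 1], [1, 0]] is invertible with inverse
   [[0, 1], [1, -A_H]], and the complement of G has N = J - A.  As
   J - A = -A (1 - A^-1 1 1^T), the matrix determinant lemma shows that N is
   invertible iff 1 - 1^T A^-1 1 = 1 - (2|V(H)| - 2|E(H)|) = 1 - 2(n - m) is a
   unit.  The second statement is the first one for the complement of G, using
   |E(G)| + |E(complement G)| = C(n,2). *)

From mathcomp Require Import all_boot all_order all_algebra zify ring.
Set Implicit Arguments. Unset Strict Implicit. Unset Printing Implicit Defensive.
Import GRing.Theory.
Local Open Scope ring_scope.

Lemma det_add1_rank1 (R : comNzRingType) n (a : 'cV[R]_n) (b : 'rV[R]_n) :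
  \det (1%:M + a *m b) = 1 + (b *m a) 0 0.
Proof.
have block_id : block_mx 1%:M 0 b 1%:M *m block_mx (1%:M + a *m b) a 0 1%:M
                  *m block_mx 1%:M 0 (- b) 1%:M
                = block_mx 1%:M a 0 (1%:M + b *m a) :> 'M[R]_(n + 1).
  rewrite !mulmx_block !(mulmx0, mul0mx, mulmx1, mul1mx, addr0, add0r).
  rewrite !(mulmxDl, mulmxDr, mulmxN, mulNmx, mulmxA, mulmx1, mul1mx).
  congr block_mx.
  - exact: addrK.
  - by rewrite [_ - b]addrC addrACA !subrr addr0.
  - exact: addrC.
have := congr1 determinant block_id.
rewrite !det_mulmx !det_lblock !det_ublock !det1 !mul1r !mulr1 => ->.
by rewrite det_mx11 !mxE eqxx.
Qed.

Definition mxsum (R : nmodType) m n (A : 'M[R]_(m, n)) : R := \sum_i \sum_j A i j.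

Section MatrixSum.
Variable R : pzRingType.

Lemma mxsumE m n (A : 'M[R]_(m, n)) :
  mxsum A = ((const_mx 1 : 'rV_m) *m A *m (const_mx 1 : 'cV_n)) 0 0.
Proof.
rewrite /mxsum exchange_big !mxE; apply: eq_bigr => j _.
by rewrite !mxE mulr1; apply: eq_bigr => i _; rewrite mxE mul1r.
Qed.

Lemma mxsum0 m n : mxsum (0 : 'M[R]_(m, n)) = 0.
Proof. by rewrite mxsumE mulmx0 mul0mx mxE. Qed.

Lemma mxsumN m n (A : 'M[R]_(m, n)) : mxsum (- A) = - mxsum A.
Proof. by rewrite !mxsumE mulmxN mulNmx mxE. Qed.

Lemma mxsum1 n : mxsum (1%:M : 'M[R]_n) = n%:R.
Proof.
rewrite mxsumE mulmx1 mxE (eq_bigr (fun _ => 1)) ?sumr_const ?card_ord // => i _.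
by rewrite !mxE mulr1.
Qed.

Lemma mxsum_block m1 m2 n1 n2 (Aul : 'M[R]_(m1, n1)) (Aur : 'M[R]_(m1, n2))
    (Adl : 'M[R]_(m2, n1)) (Adr : 'M[R]_(m2, n2)) :
  mxsum (block_mx Aul Aur Adl Adr) = mxsum Aul + mxsum Aur + mxsum Adl + mxsum Adr.
Proof.
rewrite !mxsumE -!row_mx_const -!col_mx_const mul_row_block mul_row_col.
by rewrite !mulmxDl !mxE !addrA; congr (_ + _); rewrite addrAC.
Qed.
End MatrixSum.

Lemma unitmx_const1B (R : comUnitRingType) n (A B : 'M[R]_n) :
  A *m B = 1%:M -> (const_mx 1 - A \in unitmx) = (1 - mxsum B \is a GRing.unit).
Proof.
move=> AB1; have [uA _] := mulmx1_unit AB1.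
pose u := const_mx 1 : 'cV[R]_n; pose v := const_mx 1 : 'rV[R]_n.
have Juv : const_mx 1 = u *m v.
  by apply/matrixP => i j; rewrite !mxE big_ord1 !mxE mulr1.
have -> : const_mx 1 - A = - A *m (1%:M + (- (B *m u)) *m v).
  by rewrite mulmxDr mulmx1 !mulNmx mulmxN opprK !mulmxA AB1 mul1mx -Juv addrC.
rewrite unitmxE det_mulmx det_add1_rank1 mulmxN mxE mulmxA -mxsumE.
by rewrite unitrM -scaleN1r detZ unitrM unitrX ?unitrN1 // -unitmxE uA.
Qed.

Lemma mulmx_corona_block (R : pzRingType) n (B : 'M[R]_n) :
  block_mx B 1%:M 1%:M 0 *m block_mx 0 1%:M 1%:M (- B) = 1%:M.
Proof.
rewrite mulmx_block !(mulmx0, mul0mx, mulmx1, mul1mx, addr0, add0r, mulmxN, subrr).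
by rewrite -scalar_mx_block.
Qed.

Lemma unitmx_solvable (R : comUnitRingType) n (M : 'M[R]_n) :
  M \in unitmx <-> forall b : 'cV_n, exists x, M *m x = b.
Proof.
split=> [uM b | solvM]; first by exists (invmx M *m b); rewrite mulmxA mulmxV ?mul1mx.
have [X MX] := fin_all_exists (fun j => solvM (col j 1%:M)).
pose B := \matrix_(i, j) X j i 0.
suff MB1 : M *m B = 1%:M by case: (mulmx1_unit MB1).
apply/matrixP => i j; have /(congr1 (fun y : 'cV_n => y i 0)) := MX j.
by rewrite !mxE => <-; apply: eq_bigr => k _; rewrite mxE.
Qed.

Lemma sumr_seq_count (I : finType) (M : nmodType) (s : seq I) (F : I -> M) :
  \sum_(i <- s) F i = \sum_i F i *+ count_mem i s.
Proof.
elim: s => [|a s IHs]; first by rewrite big_nil big1.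
rewrite big_cons IHs /=; under [RHS]eq_bigr do rewrite mulrnDr.
rewrite big_split /=; congr (_ + _).
rewrite (bigD1 a) //= eqxx mulr1n big1 ?addr0 // => i /negbTE ia.
by rewrite eq_sym ia mulr0n.
Qed.

Lemma count_mem_flatten_nseq (I : finType) (x : I -> nat) i :
  count_mem i (flatten [seq nseq (x j) j | j <- enum I]) = x i.
Proof.
rewrite count_flatten -map_comp sumnE big_map big_enum /= (bigD1 i) //=.
rewrite count_nseq /= eqxx mul1n big1 ?addn0 // => j /negbTE ji.
by rewrite count_nseq /= ji.
Qed.

Section LightsOut.
Variables (l : nat) (T : finType) (e : rel T).

Lemma foldl_toggle (c : T -> 'Z_l) s v :
  foldl (toggle e) c s v = c v + \sum_(w <- s) (closed_nbhd e w v)%:R.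
Proof.
elim: s c => [|w s IHs] c /=; first by rewrite big_nil addr0.
by rewrite IHs big_cons /toggle addrA.
Qed.

Lemma N_AWP : N_AW l e <->
  forall c : T -> 'Z_l, exists x : T -> 'Z_l,
    forall v, c v + \sum_w (closed_nbhd e w v)%:R * x w = 0.
Proof.
split=> [allW c | solv c].
- have [s sW] := allW c; exists (fun w => (count_mem w s)%:R) => v.
  rewrite -[RHS](sW v) foldl_toggle (sumr_seq_count s); congr (_ + _).
  by apply: eq_bigr => w _; rewrite mulr_natr.
- have [x xW] := solv c; exists (flatten [seq nseq (x w : nat) w | w <- enum T]) => v.
  rewrite foldl_toggle (sumr_seq_count (flatten _)) -[RHS](xW v); congr (_ + _).
  by apply: eq_bigr => w _; rewrite count_mem_flatten_nseq -[x w in RHS]natr_Zp mulr_natr.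
Qed.

Definition nbhd_mx n (g : 'I_n -> T) : 'M['Z_l]_n :=
  \matrix_(i, j) (closed_nbhd e (g j) (g i))%:R.

Lemma nbhd_mx_mul n (g : 'I_n -> T) (x : T -> 'Z_l) i : bijective g ->
  (nbhd_mx g *m \col_j x (g j)) i 0 = \sum_w (closed_nbhd e w (g i))%:R * x w.
Proof.
move=> gbij; rewrite mxE [RHS](reindex g) /=; last exact: onW_bij.
by apply: eq_bigr => j _; rewrite !mxE.
Qed.

Lemma N_AW_unitmx n (g : 'I_n -> T) : bijective g ->
  N_AW l e <-> nbhd_mx g \in unitmx.
Proof.
move=> gbij; have [g' gK g'K] := gbij.
apply: iff_trans N_AWP _; apply: iff_sym; apply: iff_trans (unitmx_solvable _) _.
split=> [solvM c | solv b].
- have [y My] := solvM (\col_i - c (g i)); exists (fun w => y (g' w) 0) => v.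
  have colE : \col_j y (g' (g j)) 0 = y.
    by apply/matrixP => i k; rewrite mxE gK (ord1 k).
  have := nbhd_mx_mul (fun w => y (g' w) 0) (g' v) gbij.
  by rewrite colE My mxE g'K => <-; rewrite subrr.
- have [x xW] := solv (fun v => - b (g' v) 0); exists (\col_j x (g j)).
  apply/matrixP => i k; rewrite (ord1 k) nbhd_mx_mul //.
  by move/eqP: (xW (g i)); rewrite gK addrC subr_eq0 => /eqP.
Qed.

End LightsOut.

Lemma eq_N_AW l (T : finType) (e1 e2 : rel T) : e1 =2 e2 -> N_AW l e1 <-> N_AW l e2.
Proof.
move=> e12; have toggleE c s : foldl (toggle e1) c s =1 foldl (toggle e2) c s.
  by move=> v; rewrite !foldl_toggle; under eq_bigr do rewrite /closed_nbhd e12.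
by split=> W c; have [s sW] := W c; exists s => v; rewrite ?toggleE // -toggleE.
Qed.

Lemma eq_set2_pair (T : finType) (a b x y : T) : a != b ->
  ([set a; b] == [set x; y]) = ((a, b) \in [set (x, y); (y, x)]).
Proof.
move=> neq_ab; rewrite !inE !xpair_eqE; apply/eqP/idP => [Eab | ].
  have aE : a \in [set x; y] by rewrite -Eab set21.
  have bE : b \in [set x; y] by rewrite -Eab set22.
  by move: neq_ab; case/set2P: aE => ->; case/set2P: bE => ->; rewrite ?eqxx ?orbT.
by case/orP=> /andP[/eqP-> /eqP->] //; rewrite setUC.
Qed.

Lemma clique_set2 (T : finType) (e : rel T) x y : symmetric e ->
  [forall u in [set x; y], forall v in [set x; y], (u != v) ==> e u v] =
  (x != y) ==> e x y.
Proof.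
move=> e_sym; apply/forall_inP/implyP => [clq neq_xy | exy u /set2P Hu].
  by have /forall_inP/(_ y (set22 _ _))/implyP := clq x (set21 _ _); apply.
apply/forall_inP => v /set2P Hv; apply/implyP.
by case: Hu Hv => -> [] ->; rewrite ?eqxx // e_sym eq_sym.
Qed.

Section SimpleGraph.
Variables (T : finType) (e : rel T).
Hypothesis e_simple : simple_graph e.

Lemma num_edges_handshake : (2 * num_edges e)%N = \sum_x \sum_y (e x y : nat).
Proof.
have [e_sym eirr] := e_simple.
have neq_of_edge x y : e x y -> x != y by apply: contraTneq => ->; rewrite eirr.
rewrite /num_edges; set E := [set A : {set T} | _]; rewrite pair_big /=.
have -> : \sum_(p : T * T) (e p.1 p.2 : nat) = \sum_(p | e p.1 p.2) 1.
  by rewrite [RHS]big_mkcond; apply: eq_bigr => p _; case: (e _ _).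
rewrite (partition_big (fun p => [set p.1; p.2]) (mem E)) => [|[x y] /= exy].
  2: by rewrite inE cards2 neq_of_edge //= clique_set2 // exy implybT.
rewrite -sum1_card big_distrr /=.
apply: eq_bigr => _ /[!inE] /andP[/cards2P[x [y [nxy ->]]]].
rewrite clique_set2 // nxy /= => exy; rewrite muln1 sum1dep_card.
have -> : 2%N = #|[set (x, y); (y, x)]| by rewrite cards2 xpair_eqE (negbTE nxy).
apply: eq_card => -[a b]; rewrite !inE /=; case: (boolP (e a b)) => [eab | neab].
  by rewrite eq_set2_pair ?neq_of_edge // !inE.
by rewrite andFb; apply/negbTE; apply: contra neab => /orP[] /eqP[-> ->]; rewrite // e_sym.
Qed.

Lemma complement_simple : simple_graph (complement e).
Proof.
have [e_sym eirr] := e_simple.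
by split=> [x y | x]; rewrite /complement ?eqxx // eq_sym e_sym.
Qed.

Lemma complementK : complement (complement e) =2 e.
Proof.
have [_ eirr] := e_simple.
move=> x y; rewrite /complement negb_and negbK.
by case: eqVneq => [->|] /=; rewrite ?eirr ?negbK.
Qed.

Lemma closed_nbhd_complement w v : closed_nbhd (complement e) w v = ~~ e v w.
Proof.
have [e_sym eirr] := e_simple.
rewrite /closed_nbhd /complement e_sym.
by case: eqP => [->|/eqP]; rewrite ?eirr // eq_sym => ->.
Qed.

Lemma num_edges_complement : (num_edges e + num_edges (complement e))%N = 'C(#|T|, 2).
Proof.
have [e_sym _] := e_simple; have [ce_sym _] := complement_simple.
rewrite -card_draws.
rewrite -(cardsID [set A : {set T} | [forall x in A, forall y in A, (x != y) ==> e x y]]).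
rewrite /num_edges; congr (_ + _); apply: eq_card => A; rewrite !inE.
  by rewrite andbC; case: (#|A| == 2).
case: (boolP (#|A| == 2)) => [/cards2P[x [y [nxy ->]]] | _]; rewrite ?andbF //=.
by rewrite andbT (clique_set2 _ _ ce_sym) (clique_set2 _ _ e_sym) nxy /complement nxy.
Qed.

End SimpleGraph.

Definition sum_enum_val (V : finType) (i : 'I_(#|V| + #|V|)) : V + V :=
  match split i with inl a => inl (enum_val a) | inr b => inr (enum_val b) end.

Lemma sum_enum_val_bij (V : finType) : bijective (@sum_enum_val V).
Proof.
pose sum_enum_rank (s : V + V) := unsplit
  (match s with inl u => inl (enum_rank u) | inr u => inr (enum_rank u) end).
exists sum_enum_rank => [i | [u|u]]; rewrite /sum_enum_val.
  by case E: (split i) => [a|a]; rewrite /sum_enum_rank enum_valK -E splitK.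
all: by rewrite /sum_enum_rank unsplitK enum_rankK.
Qed.

Definition adj_mx (R : pzSemiRingType) (T : finType) (e : rel T) n (g : 'I_n -> T)
  : 'M[R]_n := \matrix_(i, j) (e (g i) (g j))%:R.
Arguments adj_mx {R T} e {n} g.

Section AdjacencyMatrix.
Variable R : pzRingType.

Lemma mxsum_adj_mx (T : finType) (e : rel T) n (g : 'I_n -> T) : bijective g ->
  mxsum (adj_mx e g : 'M[R]_n) = (\sum_x \sum_y (e x y : nat))%:R.
Proof.
move=> gbij; rewrite natr_sum /mxsum [RHS](reindex g) /=; last exact: onW_bij.
apply: eq_bigr => i _; rewrite natr_sum [RHS](reindex g) /=; last exact: onW_bij.
by apply: eq_bigr => j _; rewrite mxE.
Qed.

Lemma adj_mx_iso (T T' : finType) (e : rel T) (e' : rel T') (f : T -> T') (f' : T' -> T)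
    n (g : 'I_n -> T') :
  (forall x y, e x y = e' (f x) (f y)) -> cancel f' f ->
  adj_mx e (f' \o g) = adj_mx e' g :> 'M[R]_n.
Proof. by move=> ef f'K; apply/matrixP => i j; rewrite !mxE /= ef !f'K. Qed.

Lemma adj_mx_corona (V : finType) (eH : rel V) :
  adj_mx (corona eH) (@sum_enum_val V) = block_mx (adj_mx eH enum_val) 1%:M 1%:M 0
    :> 'M[R]_(#|V| + #|V|).
Proof.
apply/matrixP => i j; rewrite -(splitK i) -(splitK j) mxE /sum_enum_val !unsplitK.
case: (split i) => a; case: (split j) => b /=.
all: by rewrite ?block_mxEul ?block_mxEur ?block_mxEdl ?block_mxEdr !mxE
  ?(inj_eq enum_val_inj).
Qed.

End AdjacencyMatrix.

Lemma nbhd_mx_complement l (T : finType) (e : rel T) n (g : 'I_n -> T) :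
  simple_graph e -> nbhd_mx l (complement e) g = const_mx 1 - adj_mx e g.
Proof.
move=> e_simple; apply/matrixP => i j; rewrite !mxE closed_nbhd_complement //.
by case: (e _ _); rewrite ?subr0 ?subrr.
Qed.

Lemma unitZp_intr l (z : int) : (1 < l)%N ->
  ((z%:~R : 'Z_l) \is a GRing.unit) = coprimez z l.
Proof.
move=> l_gt1; case: z => n; last rewrite NegzE intrN unitrN coprimeNz.
all: by rewrite -pmulrn unitZpE // coprimezE coprime_sym.
Qed.

Lemma N_AW_complement_pendant l (T : finType) (e : rel T) :
  simple_graph e -> pendant_graph e ->
  N_AW l (complement e) <->
  ((2 * (#|T|%:Z - (num_edges e)%:Z) - 1)%:~R : 'Z_l) \is a GRing.unit.
Proof.
move=> e_simple [V [eH [f [_ [[f' fK f'K] ef]]]]].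
pose g := f' \o @sum_enum_val V.
have g_bij : bijective g := bij_comp (Bijective f'K fK) (sum_enum_val_bij V).
have cardT : #|T| = (#|V| + #|V|)%N by rewrite -(bij_eq_card g_bij) card_ord.
pose B : 'M['Z_l]_#|V| := adj_mx eH enum_val.
have adjE : adj_mx e g = block_mx B 1%:M 1%:M 0.
  by rewrite (adj_mx_iso _ _ ef) // adj_mx_corona.
have sumB : mxsum B = (2 * num_edges e)%:R - (#|V| + #|V|)%:R.
  rewrite num_edges_handshake // -(mxsum_adj_mx _ _ g_bij) adjE mxsum_block mxsum0 !mxsum1.
  by ring.
rewrite (N_AW_unitmx _ _ g_bij) nbhd_mx_complement // adjE.
rewrite (unitmx_const1B (mulmx_corona_block B)).
have -> : 1 - mxsum (block_mx 0 1%:M 1%:M (- B)) =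
          - (2 * (#|T|%:Z - (num_edges e)%:Z) - 1)%:~R.
  by rewrite mxsum_block mxsum0 mxsumN !mxsum1 sumB cardT; ring.
by rewrite unitrN.
Qed.

Unset Implicit Arguments.

Theorem lemma3p10 (l : nat) (hl : (2 <= l)%N) :
  (forall (T : finType) (e : rel T), simple_graph e -> pendant_graph e ->
     (N_AW l (complement e) <->
      gcdz (2 * ((#|T|)%:Z - (num_edges e)%:Z) - 1) (l%:Z) = 1%N))
  /\
  (forall (T : finType) (e : rel T) (k : int), simple_graph e ->
     ~~ odd #|T| ->
     (num_edges e)%:Z = ('C(#|T|, 2))%:Z - ((#|T|./2)%:Z + k) ->
     pendant_graph (complement e) ->
     (N_AW l e <-> gcdz ((#|T|)%:Z - 2 * k - 1) (l%:Z) = 1%N)).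
Proof.
split=> [T e e_simple e_pendant | T e k e_simple T_even edgesE ce_pendant].
  by rewrite N_AW_complement_pendant // unitZp_intr //; split=> /eqP.
rewrite -(eq_N_AW l (complementK e_simple)).
rewrite N_AW_complement_pendant //; last exact: complement_simple.
rewrite unitZp_intr //.
have := num_edges_complement e_simple; have := odd_double_half #|T|.
rewrite (negbTE T_even) add0n => T_double ce_edges.
have -> : 2 * (#|T|%:Z - (num_edges (complement e))%:Z) - 1 = #|T|%:Z - 2 * k - 1.
  by lia.
by split=> /eqP.
Qed.
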